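(* Let $P=[0,1]$. No online algorithm for the all-time worst-case (ATWC) dispersion problem in $P$ achieves a competitive ratio better than $2\ln 2$ ($\approx 1.386$).
   Context: Let $P\subset\mathbb{R}^k$ be a $k$-dimensional polytope with boundary $\partial P$; all distances $dis(\cdot,\cdot)$ are Euclidean. An instance is a sequence $S=((s_1,d_1),\dots,(s_n,d_n))$ of arrival and departure times with $s_i<d_i$ and $0=s_1\le s_2\le\dots\le s_n$; point $i$ is present at time $t$ iff $s_i\le t\le d_i$; $T=\max_i d_i$. For locations $X=(X_1,\dots,X_n)\in P^n$ and $t\le T$, let $d_{min}(t;X)=\min\{dis(X_i,\partial P),\ dis(X_i,X_j)\}$, the minimum taken over present points $i\neq j$ at time $t$. Let $OPT_A(S;P)=\max_{X}\min_{t\le T} d_{min}(t;X)$. In the online ATWC problem, an algorithm is notified of each arrival/departure event as it occurs and, when point $i$ arrives, must irrevocably choose $X_i\in P$ without knowing future events or the total number $n$ of points; the events are chosen by an adaptive adversary who knows the algorithm and sees its outputs so far. An online algorithm is $\sigma$-competitive (has competitive ratio $\sigma$) if for every instance $S$, $OPT_A(S;P)\le \sigma\cdot \min_{t\le T} d_{min}(t;X)$ where $X$ is the algorithm's output. *)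

From HB Require Import structures.
From mathcomp Require Import all_boot all_order all_algebra.
From mathcomp Require Import all_classical all_reals all_analysis.
Set Implicit Arguments. Unset Strict Implicit. Unset Printing Implicit Defensive.
Import Order.TTheory GRing.Theory Num.Theory.
Local Open Scope classical_set_scope.
Local Open Scope ring_scope.

Definition inP {R : realType} (x : R) : Prop := 0 <= x <= 1.

Definition dis_bd {R : realType} (x : R) : R := Num.min `|x - 0| `|x - 1|.

(* An instance with n points (indexed 0..n-1), arrival times s, departure d. *)
Definition valid_instance {R : realType} (n : nat) (s d : nat -> R) : Prop :=
  (0 < n)%N /\ s 0%N = 0 /\
  (forall i j, (i <= j < n)%N -> s i <= s j) /\
  (forall i, (i < n)%N -> s i < d i).

Definition present {R : realType} (n : nat) (s d : nat -> R) (i : nat) (t : R) : Prop :=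
  (i < n)%N /\ s i <= t <= d i.

Definition Tmax {R : realType} (n : nat) (d : nat -> R) : R :=
  \big[Num.max/0]_(i < n) d i.

(* The set of all quantities occurring in d_min(t;X) for some t <= T:
   min_{t<=T} d_min(t;X) is the infimum of this set (times at which no point is
   present contribute nothing). *)
Definition dmin_terms {R : realType} (n : nat) (s d : nat -> R) (X : nat -> R) : set R :=
  [set r | exists t, t <= Tmax n d /\
     ((exists i, present n s d i t /\ r = dis_bd (X i)) \/
      (exists i j, i <> j /\ present n s d i t /\ present n s d j t /\
                   r = `|X i - X j|))].

Definition atwc_value {R : realType} (n : nat) (s d : nat -> R) (X : nat -> R) : R :=
  inf (dmin_terms n s d X).

Definition OPT_A {R : realType} (n : nat) (s d : nat -> R) : R :=
  sup [set v | exists X : nat -> R, (forall i, (i < n)%N -> inP (X i)) /\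
                                    v = atwc_value n s d X].

(* A deterministic online algorithm: when point i arrives it sees the arrival
   times s_0..s_i (the length gives i) and, for each earlier point j < i,
   Some d_j if j has already departed (d_j < s_i) and None otherwise.
   (Against a deterministic algorithm an adaptive adversary is equivalent to
   choosing the instance in advance, the algorithm's outputs being determined
   by this history.) *)
Definition online_alg (R : realType) := seq R -> seq (option R) -> R.

Definition history_arr {R : realType} (s : nat -> R) (i : nat) : seq R :=
  [seq s j | j <- iota 0 i.+1].

Definition history_dep {R : realType} (s d : nat -> R) (i : nat) : seq (option R) :=
  [seq (if d j < s i then Some (d j) else None) | j <- iota 0 i].

Definition alg_output {R : realType} (A : online_alg R) (s d : nat -> R) : nat -> R :=
  fun i => A (history_arr s i) (history_dep s d i).

Definition competitive {R : realType} (A : online_alg R) (sigma : R) : Prop :=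
  forall (n : nat) (s d : nat -> R), valid_instance n s d ->
    OPT_A n s d <= sigma * atwc_value n s d (alg_output A s d).

(* Let all points arrive at time 0 and stay until time 1. The placements
   x_0, x_1, ... of the algorithm do not depend on the number n of points,
   while OPT is at least 1/(n+1) (equally spaced points), so a
   sigma-competitive algorithm must place x_e at distance at least
   1/((e+2) sigma) from the boundary and from every earlier point. Sort the
   first 2k+2 points along [0,1]: each gap is at least the separation required
   by the later of its two endpoints. Summing the gaps, with a threshold
   t = 1/(k+2) below which only the points e >= k fall, gives
   sigma >= 2 (1/(k+2) + ... + 1/(2k+3)) - 1/(k+2) >= 2 ln 2 - 1/(k+2). *)

From HB Require Import structures.
From mathcomp Require Import all_boot all_order all_algebra.
From mathcomp Require Import all_classical all_reals all_analysis.
From mathcomp Require Import lra zify.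
Set Implicit Arguments.
Unset Strict Implicit.
Unset Printing Implicit Defensive.

Import Order.TTheory GRing.Theory Num.Theory.
Local Open Scope ring_scope.

Lemma ge0_of_le_mulr (R : realDomainType) (r a s : R) :
  0 < r -> 0 <= a -> r <= s * a -> 0 <= s.
Proof.
move=> r_gt0 a_ge0 r_le; rewrite leNgt; apply/negP => s_lt0.
have := le_trans r_le (mulr_le0_ge0 (ltW s_lt0) a_ge0).
by rewrite leNgt r_gt0.
Qed.

Lemma natr_dist_ge1 (R : realDomainType) (a b : nat) :
  a <> b -> 1 <= `|a%:R - b%:R| :> R.
Proof.
wlog lt_ab : a b / (a < b)%N.
  move=> wlog_ab neq_ab; case: (ltngtP a b) => [lt_ab | lt_ba | //].
    exact: wlog_ab.
  by rewrite distrC; apply: wlog_ab => // eq_ba; apply: neq_ab.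
move=> _; rewrite distrC -(natrB _ (ltnW lt_ab)) normr_nat.
by rewrite ler1n subn_gt0.
Qed.

Section Packing.
Variable R : realDomainType.

(* A gap of length at least [min a b] pays [t] plus the nonpositive deficits
   [min 0 (a - t)] and [min 0 (b - t)] of its two endpoints. *)
Lemma min_ge_deficits (a b t : R) :
  t + Num.min 0 (a - t) + Num.min 0 (b - t) <= Num.min a b.
Proof.
have ha0 : Num.min 0 (a - t) <= 0 by rewrite ge_min lexx.
have hat : Num.min 0 (a - t) <= a - t by rewrite ge_min lexx orbT.
have hb0 : Num.min 0 (b - t) <= 0 by rewrite ge_min lexx.
have hbt : Num.min 0 (b - t) <= b - t by rewrite ge_min lexx orbT.
by case: (leP a b); lra.
Qed.

Lemma sorted_gaps_sum (y h : nat -> R) (t : R) (a : nat) (l : seq nat) :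
  sorted (fun i j => y i <= y j) (a :: l) -> uniq (a :: l) ->
  {in a :: l &, forall u v, u != v -> y u <= y v -> t + h u + h v <= y v - y u} ->
  (size l)%:R * t + 2 * \sum_(e <- a :: l) h e - h a - h (last a l)
    <= y (last a l) - y a.
Proof.
elim: l a => [|b l IHl] a /=; first by move=> *; rewrite big_seq1; lra.
move=> /andP[yab sorted_bl] /andP[]; rewrite inE negb_or => /andP[neq_ab _] uniq_bl sep.
have gap_ab : t + h a + h b <= y b - y a by apply: sep; rewrite ?inE ?eqxx ?orbT.
have := IHl b sorted_bl uniq_bl (sub_in2 (@mem_behead _ [:: a, b & l]) sep).
rewrite !big_cons mulrS; lra.
Qed.

Lemma packing_bound (m : nat) (y kap : nat -> R) (S t : R) :
  (0 < m)%N ->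
  (forall e, (e < m)%N -> kap e <= y e) ->
  (forall e, (e < m)%N -> kap e <= S - y e) ->
  (forall u v, (u < m)%N -> (v < m)%N -> u != v ->
     Num.min (kap u) (kap v) <= `|y u - y v|) ->
  m.+1%:R * t + 2 * \sum_(0 <= e < m) Num.min 0 (kap e - t) <= S.
Proof.
move=> m_gt0 kap_le_y kap_le_Sy sep.
set h := fun e => Num.min 0 (kap e - t).
have h_le e : h e <= kap e - t by rewrite /h ge_min lexx orbT.
set L := sort (fun i j => y i <= y j) (iota 0 m).
have memL u : (u \in L) = (u < m)%N by rewrite mem_sort mem_iota.
have sizeL : size L = m by rewrite size_sort size_iota.
have sortedL : sorted (fun i j => y i <= y j) L.
  by apply: sort_sorted => i j; exact: le_total.
have uniqL : uniq L by rewrite sort_uniq iota_uniq.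
have -> : \sum_(0 <= e < m) h e = \sum_(e <- L) h e.
  by rewrite (perm_big _ (permEl (perm_sort _ _))) /index_iota subn0.
clearbody L; case: L => [|a l] in memL sizeL sortedL uniqL *.
  by rewrite -sizeL in m_gt0.
have [a_lt last_lt] : (a < m)%N /\ (last a l < m)%N.
  by rewrite -!memL mem_head mem_last.
have sepL : {in a :: l &, forall u v, u != v -> y u <= y v ->
    t + h u + h v <= y v - y u}.
  move=> u v; rewrite !memL => u_lt v_lt neq_uv yuv.
  rewrite (le_trans (min_ge_deficits _ _ _)) // -[y v - y u]ger0_norm ?subr_ge0 //.
  by rewrite distrC; exact: sep.
have gaps := sorted_gaps_sum sortedL uniqL sepL.
have [h_first h_last] := (h_le a, h_le (last a l)).
have [left_end right_end] := (kap_le_y a a_lt, kap_le_Sy _ last_lt).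
have -> : m.+1%:R = (size l)%:R + 2 :> R by rewrite -sizeL /= -addn2 natrD.
lra.
Qed.

End Packing.

Section Harmonic.
Variable R : realType.

Lemma lnD1_sub_le_inv (x : R) : 0 < x -> ln (x + 1) - ln x <= x^-1.
Proof.
move=> x_gt0; rewrite -ln_div ?posrE ?addr_gt0 //.
rewrite mulrDl divff ?gt_eqF // div1r; apply: le_ln1Dx.
by rewrite (lt_le_trans (_ : -1 < 0)) ?ltrN10 // invr_ge0 ltW.
Qed.

Lemma ln_sub_le_harmonic (m n : nat) : (0 < m)%N -> (m <= n)%N ->
  ln n%:R - ln m%:R <= \sum_(m <= j < n) j%:R^-1 :> R.
Proof.
move=> m_gt0 le_mn; rewrite -(telescope_sumr (fun j => ln j%:R) le_mn).
apply: ler_sum_nat => j /andP[le_mj _] /=.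
by rewrite -addn1 natrD lnD1_sub_le_inv // ltr0n (leq_trans m_gt0).
Qed.

Lemma harmonic_deficit_sum_ge (k : nat) :
  2 * ln 2 - k.+2%:R^-1 <= (2 * k).+3%:R * k.+2%:R^-1 +
    2 * \sum_(0 <= e < (2 * k).+2) Num.min 0 (e.+2%:R^-1 - k.+2%:R^-1) :> R.
Proof.
set t := k.+2%:R^-1.
have le_k : (k <= (2 * k).+2)%N by lia.
rewrite (big_cat_nat (leq0n k) le_k) /=.
have -> : \sum_(0 <= e < k) Num.min 0 (e.+2%:R^-1 - t) = 0.
  rewrite big_nat_cond big1 // => e /andP[/andP[_ lt_ek] _].
  apply/min_idPl; rewrite subr_ge0 lef_pV2 ?posrE ?ltr0n // ler_nat.
  exact: ltnW.
have -> : \sum_(k <= e < (2 * k).+2) Num.min 0 (e.+2%:R^-1 - t) =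
          \sum_(k <= e < (2 * k).+2) (e.+2%:R^-1 - t).
  apply: eq_big_nat => e /andP[le_ke _].
  by apply/min_idPr; rewrite subr_le0 lef_pV2 ?posrE ?ltr0n // ler_nat.
rewrite sumrB sumr_const_nat.
have harm : ln 2 <= \sum_(k <= e < (2 * k).+2) e.+2%:R^-1 :> R.
  have := @ln_sub_le_harmonic (k.+2) ((2 * k).+4) isT ltac:(lia).
  have -> : \sum_(k.+2 <= j < (2 * k).+4) j%:R^-1 =
            \sum_(k <= e < (2 * k).+2) e.+2%:R^-1 :> R.
    rewrite -addn2 big_addn (_ : _ - 2 = (2 * k).+2)%N //.
    by apply: eq_bigr => e _; rewrite addn2.
  by rewrite (_ : (2 * k).+4 = 2 * k.+2)%N ?natrM ?lnM ?posrE //; [lra | lia].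
have k2t : k.+2%:R * t = 1 by rewrite mulfV ?pnatr_eq0.
rewrite (_ : _ - k = k.+2)%N; last by lia.
have -> : (2 * k).+3%:R = 2 * k.+2%:R - 1 :> R by rewrite -!natr1 natrM; lra.
rewrite -[t *+ _]mulr_natl; lra.
Qed.

End Harmonic.

Section OnlineSequence.
Variable R : realType.

Lemma dis_bd_ge0 (z : R) : 0 <= dis_bd z.
Proof. by rewrite /dis_bd le_min !normr_ge0. Qed.

Lemma dis_bdE (z : R) : inP z -> dis_bd z = Num.min z (1 - z).
Proof.
by case/andP=> z_ge0 z_le1; rewrite /dis_bd subr0 distrC !ger0_norm ?subr_ge0.
Qed.

Lemma online_sequence_ratio_ge (x : nat -> R) (sigma : R) :
  (forall e, inP (x e)) ->
  (forall e, e.+2%:R^-1 <= sigma * dis_bd (x e)) ->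
  (forall u v, (u < v)%N -> v.+2%:R^-1 <= sigma * `|x u - x v|) ->
  2 * ln 2 <= sigma.
Proof.
move=> xP bd sep.
have sigma_ge0 : 0 <= sigma.
  by apply: (ge0_of_le_mulr _ (dis_bd_ge0 _) (bd 0%N)); rewrite invr_gt0.
have bound k : 2 * ln 2 - k.+2%:R^-1 <= sigma.
  apply: le_trans (harmonic_deficit_sum_ge R k) _.
  apply: (packing_bound (y := fun e => sigma * x e) (kap := fun e => e.+2%:R^-1)).
  - by [].
  - move=> e _; apply: le_trans (bd e) _.
    by rewrite ler_wpM2l // dis_bdE // ge_min lexx.
  - move=> e _; apply: le_trans (bd e) _.
    by rewrite -{2}[sigma]mulr1 -mulrBr ler_wpM2l // dis_bdE // ge_min lexx orbT.
  move=> u v _ _ /negPf neq_uv; rewrite -mulrBr normrM ger0_norm //.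
  case: ltngtP neq_uv => // [lt_uv|lt_vu] _.
    by apply: le_trans (sep u v lt_uv); rewrite ge_min lexx orbT.
  by rewrite distrC; apply: le_trans (sep v u lt_vu); rewrite ge_min lexx.
rewrite leNgt; apply/negP => lt_sigma.
have [k lt_k] : exists k, k.+2%:R^-1 < 2 * ln 2 - sigma.
  exists (Num.bound (2 * ln 2 - sigma)^-1); rewrite invf_plt ?posrE ?subr_gt0 //.
  apply: lt_trans (archi_boundP _) _; last by rewrite ltr_nat.
  by rewrite invr_ge0 subr_ge0 ltW.
by move: (bound k); rewrite lerBlDr -lerBlDl leNgt lt_k.
Qed.

End OnlineSequence.

Section Instances.
Variable R : realType.
Implicit Types (n : nat) (s d X : nat -> R).

Lemma Tmax_ge0 n d : 0 <= Tmax n d.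
Proof.
by apply: (big_rec (fun y : R => 0 <= y)) => // i y _ y_ge0; rewrite le_max y_ge0 orbT.
Qed.

Lemma dmin_terms_ge0 n s d X : lbound (dmin_terms n s d X) 0.
Proof.
move=> r [t [_ [[i [_ ->]] | [i [j [_ [_ [_ ->]]]]]]]]; first exact: dis_bd_ge0.
exact: normr_ge0.
Qed.

Lemma atwc_value_le n s d X r : dmin_terms n s d X r -> atwc_value n s d X <= r.
Proof. by move=> Xr; apply: ge_inf => //; exists 0; exact: dmin_terms_ge0. Qed.

Lemma atwc_value_ge n s d X r : nonempty (dmin_terms n s d X) ->
  (forall i, (i < n)%N -> r <= dis_bd (X i)) ->
  (forall i j, (i < n)%N -> (j < n)%N -> i <> j -> r <= `|X i - X j|) ->
  r <= atwc_value n s d X.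
Proof.
move=> terms_n0 r_le_bd r_le_dist; apply: lb_le_inf => // y.
move=> [t [_ [[i [[i_lt _] ->]] | [i [j [neq_ij [[i_lt _] [[j_lt _] ->]]]]]]]].
  exact: r_le_bd.
exact: r_le_dist.
Qed.

End Instances.

Definition batch_arr {R : realType} : nat -> R := fun=> 0.
Definition batch_dep {R : realType} : nat -> R := fun=> 1.

Section BatchInstance.
Variable R : realType.
Implicit Types (n : nat) (X : nat -> R).

Lemma batch_valid n : (0 < n)%N -> valid_instance n batch_arr (@batch_dep R).
Proof. by move=> n_gt0; do !split => // *; rewrite ?lexx ?ltr01. Qed.

Lemma batch_present0 n i : (i < n)%N -> present n batch_arr (@batch_dep R) i 0.
Proof. by move=> i_lt; split; rewrite // lexx ler01. Qed.

Lemma batch_dis_bd_term n X i : (i < n)%N ->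
  dmin_terms n batch_arr batch_dep X (dis_bd (X i)).
Proof.
move=> i_lt; exists 0; split; first exact: Tmax_ge0.
by left; exists i; split; first exact: batch_present0.
Qed.

Lemma batch_dist_term n X i j : (i < n)%N -> (j < n)%N -> i <> j ->
  dmin_terms n batch_arr batch_dep X `|X i - X j|.
Proof.
move=> i_lt j_lt neq_ij; exists 0; split; first exact: Tmax_ge0.
have [pi pj] := (batch_present0 i_lt, batch_present0 j_lt).
by right; exists i, j.
Qed.

Lemma OPT_A_batch_ge n : (0 < n)%N -> n.+1%:R^-1 <= OPT_A n batch_arr (@batch_dep R).
Proof.
move=> n_gt0; set q := n.+1%:R^-1.
have q_gt0 : 0 < q by rewrite invr_gt0.
have nq : n.+1%:R * q = 1 by rewrite mulfV ?pnatr_eq0.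
pose u i := i.+1%:R * q.
have u_sep i : (i < n)%N -> q <= u i /\ q <= 1 - u i.
  move=> i_lt; rewrite /u; split.
    by rewrite -[q in q <= _]mul1r ler_pM2r // ler1n.
  have -> : 1 - i.+1%:R * q = (n.+1%:R - i.+1%:R) * q by rewrite mulrBl nq.
  rewrite -[q in q <= _]mul1r ler_pM2r // -natrB ?ler1n ?subn_gt0 //.
  exact: ltnW.
have u_dist i j : i <> j -> q <= `|u i - u j|.
  move=> neq_ij; rewrite /u -mulrBl normrM [`|q|]gtr0_norm // ler_pMl //.
  by apply: natr_dist_ge1 => -[].
have uP i : (i < n)%N -> inP (u i).
  by move=> /u_sep[? ?]; apply/andP; split; lra.
have u_opt : q <= atwc_value n batch_arr batch_dep u.
  apply: atwc_value_ge => [|i i_lt|i j _ _ neq_ij]; last exact: u_dist.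
    by exists (dis_bd (u 0%N)); exact: batch_dis_bd_term.
  rewrite dis_bdE; last exact: uP.
  by rewrite le_min; have [-> ->] := u_sep i i_lt.
apply: le_trans u_opt _; apply: sup_upper_bound; last by exists u.
split; first by exists (atwc_value n batch_arr batch_dep u), u.
exists 1 => _ [Y [YP ->]].
apply: le_trans (atwc_value_le (batch_dis_bd_term Y n_gt0)) _.
have Y0P := YP 0%N n_gt0; rewrite dis_bdE // ge_min.
by case/andP: Y0P => _ ->.
Qed.

Lemma batch_ratio_bounds (x : nat -> R) (sigma : R) :
  (forall n, (0 < n)%N -> n.+1%:R^-1 <= sigma * atwc_value n batch_arr batch_dep x) ->
  (forall e, e.+2%:R^-1 <= sigma * dis_bd (x e)) /\
  (forall u v, (u < v)%N -> v.+2%:R^-1 <= sigma * `|x u - x v|).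
Proof.
move=> ratio.
have atwc_ge0 n : (0 < n)%N -> 0 <= atwc_value n batch_arr batch_dep x.
  move=> n_gt0; apply: atwc_value_ge => [|i _|i j _ _ _]; last exact: normr_ge0.
    by exists (dis_bd (x 0%N)); exact: batch_dis_bd_term.
  exact: dis_bd_ge0.
have sigma_ge0 : 0 <= sigma.
  by apply: (ge0_of_le_mulr _ (atwc_ge0 1%N isT) (ratio 1%N isT)); rewrite invr_gt0.
split=> [e | u v lt_uv].
  apply: le_trans (ratio e.+1 isT) _; rewrite ler_wpM2l //.
  exact/atwc_value_le/batch_dis_bd_term.
apply: le_trans (ratio v.+1 isT) _; rewrite ler_wpM2l //.
apply/atwc_value_le/batch_dist_term => //; first exact: ltnW.
by move=> eq_uv; rewrite eq_uv ltnn in lt_uv.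
Qed.

End BatchInstance.

Theorem theorem1 (R : realType) (A : online_alg R)
  (HA : forall (a : seq R) (b : seq (option R)), inP (A a b))
  (sigma : R) (Hsigma : sigma < 2 * ln 2) :
  ~ competitive A sigma.
Proof.
move=> A_comp.
have [bd sep] := batch_ratio_bounds (fun n n_gt0 =>
  le_trans (OPT_A_batch_ge R n_gt0) (A_comp _ _ _ (batch_valid R n_gt0))).
have := online_sequence_ratio_ge (fun e => HA _ _) bd sep.
by rewrite leNgt Hsigma.
Qed.
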